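(* Let $J\subset I$, $u\in W$, $w\in W^J$ and $v\in W_J$. Write $uwv=w'v'$ with $w'\in W^J$ and $v'\in W_J$. If $l(uwv)=l(wv)-l(u)$, then $w'\le w$. If moreover $w'=w$, then $\{w^{-1}(\alpha_i): i\in\mathrm{supp}(u)\}\subset\{\alpha_j:j\in J\}$.
   Context: $W$ is the Weyl group of a semisimple group with simple roots $\alpha_i$, $i\in I$, simple reflections $s_i$, length $l$ and Bruhat order $\le$. For $J\subset I$, $W_J$ is the subgroup generated by $\{s_j:j\in J\}$ and $W^J$ the set of minimal length representatives of $W/W_J$. For $u\in W$, $\mathrm{supp}(u)\subset I$ is the set of $i$ such that $s_i$ occurs in some (equivalently any) reduced expression of $u$. *)

From HB Require Import structures.
From mathcomp Require Import all_boot all_order all_algebra.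
From Stdlib Require Import ClassicalEpsilon.
Set Implicit Arguments. Unset Strict Implicit. Unset Printing Implicit Defensive.
Import Order.TTheory GRing.Theory Num.Theory.
Local Open Scope ring_scope.

(* Weyl group of a semisimple group, realized faithfully as the group of
   matrices (over rat, acting on column vectors written in the basis of
   simple roots) generated by the simple reflections s_i determined by the
   Cartan matrix A (convention: s_i(alpha_j) = alpha_j - A i j * alpha_i). *)

Section Weyl.
Variable n : nat.
Variable A : 'M[int]_n.

Definition cartan_matrix : Prop :=
  [/\ forall i, A i i = 2,
      forall i j, i != j -> A i j <= 0
    & forall i j, (A i j == 0) = (A j i == 0)].

(* Finite type (= Cartan matrix of a semisimple group / reduced root system):
   symmetrizable with positive definite symmetrization D A. *)
Definition finite_type : Prop :=
  cartan_matrix /\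
  exists d : 'I_n -> rat,
    [/\ forall i, 0 < d i,
        forall i j, d i * (A i j)%:~R = d j * (A j i)%:~R
      & forall x : 'cV[rat]_n, x != 0 ->
          0 < \sum_i \sum_j x i 0 * d i * (A i j)%:~R * x j 0].

Definition alpha (i : 'I_n) : 'cV[rat]_n := delta_mx i 0.

Definition sref (i : 'I_n) : 'M[rat]_n :=
  \matrix_(k, j) ((k == j)%:R - (k == i)%:R * (A i j)%:~R).

Definition word_mx (s : seq 'I_n) : 'M[rat]_n :=
  foldr (fun i M => sref i *m M) 1%:M s.

Definition inW (M : 'M[rat]_n) : Prop := exists s, M = word_mx s.

Definition inWJ (J : {set 'I_n}) (M : 'M[rat]_n) : Prop :=
  exists s, all (fun i => i \in J) s /\ M = word_mx s.

Definition is_length (M : 'M[rat]_n) (k : nat) : Prop :=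
  (exists s, size s = k /\ word_mx s = M) /\
  (forall s, word_mx s = M -> (k <= size s)%N).

Definition wlen (M : 'M[rat]_n) : nat :=
  epsilon (inhabits 0%N) (is_length M).

Definition is_reflection (t : 'M[rat]_n) : Prop :=
  exists x i, inW x /\ t = x *m sref i *m invmx x.

Inductive bruhat_le : 'M[rat]_n -> 'M[rat]_n -> Prop :=
| bruhat_refl x : bruhat_le x x
| bruhat_step x y t : bruhat_le x y -> is_reflection t ->
    (wlen y < wlen (y *m t))%N -> bruhat_le x (y *m t).

Definition minrep (J : {set 'I_n}) (w : 'M[rat]_n) : Prop :=
  inW w /\ forall v, inWJ J v -> (wlen w <= wlen (w *m v))%N.

Definition supp (u : 'M[rat]_n) : 'I_n -> Prop :=
  fun i => exists s, word_mx s = u /\ size s = wlen u /\ i \in s.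

End Weyl.

From mathcomp Require Import all_boot all_order all_algebra.
From mathcomp Require Import ring lra zify.
From Stdlib Require Import Classical ClassicalEpsilon.
Set Implicit Arguments. Unset Strict Implicit. Unset Printing Implicit Defensive.
Import Order.TTheory GRing.Theory Num.Theory.
Local Open Scope ring_scope.

(** In the geometric representation, where [s_i x = x - <x, alpha_i^v> alpha_i],
    the sign of roots controls lengths: for [x] in a parabolic subgroup [W_K] and
    [i \in K], [x alpha_i] is a nonnegative combination of simple roots when
    [l_K(x s_i) >= l_K(x)] and a nonpositive one otherwise.  This is proved by
    induction on [l_K(x)], splitting off a factor in the rank-two subgroup generated
    by [s_i] and a descent [s_j] of [x]; in finite type the rank-two subgroups are
    of type A1xA1, A2, B2 or G2 and are checked by explicit computation.  Hence
    [W^J] consists of the [w] with [w alpha_j > 0] for [j \in J], and factorizations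
    [w v] with [w \in W^J], [v \in W_J] are unique.

    Then apply the letters [s_i] of a reduced word of [u^-1] one by one to [w' v'];
    the length grows at each step.  Either [s_i a] is again in [W^J], and
    [a < s_i a = a (a^-1 s_i a)] is a Bruhat step, or [s_i a alpha_j < 0] for some
    [j \in J]; integrality of roots then forces [a alpha_j = alpha_i], so that
    [s_i a = a s_j] and the letter is absorbed into the [W_J] part.  The final
    [W^J] part is [w], whence [w' <= w]; if [w' = w] no Bruhat step occurred, so
    every letter [i] of [u] satisfies [alpha_i = w alpha_j] for some [j \in J]. *)

Lemma classic_ex_minn (P : nat -> Prop) :
  (exists k, P k) -> exists k, P k /\ forall k', P k' -> (k <= k')%N.
Proof.
move=> [k0 Pk0]; elim/ltn_ind: k0 Pk0 => k0 IH Pk0.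
have [[k' [Pk' lt_k'k0]]|no_smaller] := classic (exists k', P k' /\ (k' < k0)%N).
  exact: IH Pk'.
exists k0; split => // k' Pk'; rewrite leqNgt; apply/negP => lt_k'k0.
by apply: no_smaller; exists k'.
Qed.

Section WeylGroup.
Variable n : nat.
Variable A : 'M[int]_n.
Hypothesis A_diag : forall i, A i i = 2.

Implicit Types (K I : {set 'I_n}) (s t : seq 'I_n).

Local Notation W := (word_mx A).
Local Notation wordin K s := (all (fun i => i \in K) s).

(** * Simple reflections, words and parabolic lengths *)

Definition coroot (i : 'I_n) (x : 'cV[rat]_n) : rat := (\row_k (A i k)%:~R *m x) 0 0.

Lemma corootD i (x y : 'cV[rat]_n) : coroot i (x + y) = coroot i x + coroot i y.
Proof. by rewrite /coroot mulmxDr mxE. Qed.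

Lemma corootZ i c (x : 'cV[rat]_n) : coroot i (c *: x) = c * coroot i x.
Proof. by rewrite /coroot -scalemxAr mxE. Qed.

Lemma coroot0 i : coroot i 0 = 0.
Proof. by rewrite /coroot mulmx0 mxE. Qed.

Lemma coroot_alpha i j : coroot i (alpha j) = (A i j)%:~R.
Proof. by rewrite /coroot /alpha -colE !mxE. Qed.

Lemma sref_mul i (x : 'cV[rat]_n) : sref A i *m x = x - coroot i x *: alpha i.
Proof.
apply/matrixP => k l; rewrite ord1 !mxE /coroot !mxE.
under eq_bigr => j _ do rewrite !mxE mulrBl.
rewrite sumrB (bigD1 k) //= eqxx mul1r big1 ?addr0; last first.
  by move=> j /negbTE; rewrite eq_sym => ->; rewrite mul0r.
congr (_ - _); rewrite andbT mulr_suml; apply: eq_bigr => j _.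
by rewrite !mxE mulrC mulrA mulrAC [x j 0 * _]mulrC.
Qed.

Lemma sref_alpha i j : sref A i *m alpha j = alpha j - (A i j)%:~R *: alpha i.
Proof. by rewrite sref_mul coroot_alpha. Qed.

Lemma eq_mx_alpha (M N : 'M[rat]_n) :
  (forall j, M *m alpha j = N *m alpha j) -> M = N.
Proof.
move=> eqMN; apply/matrixP => k j.
by have := congr1 (fun x : 'cV[rat]_n => x k 0) (eqMN j); rewrite /alpha -!colE !mxE.
Qed.

Lemma sref_alpha_self i : sref A i *m alpha i = - alpha i.
Proof. by rewrite sref_alpha A_diag scaler_nat mulr2n opprD addNKr. Qed.

Lemma sref_sqr i : sref A i *m sref A i = 1%:M.
Proof.
apply: eq_mx_alpha => j; rewrite mul1mx -mulmxA [sref A i *m alpha j]sref_mul.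
by rewrite mulmxBr -scalemxAr sref_alpha_self sref_mul scalerN opprK subrK.
Qed.

Lemma word_mx_cat s t : W (s ++ t) = W s *m W t.
Proof. by elim: s => [|i s IH] /=; rewrite ?mul1mx // IH mulmxA. Qed.

Lemma word_mx_rcons s i : W (rcons s i) = W s *m sref A i.
Proof. by rewrite -cats1 word_mx_cat /= mulmx1. Qed.

Lemma word_mx_rconsK s i : W (rcons s i) *m sref A i = W s.
Proof. by rewrite word_mx_rcons -mulmxA sref_sqr mulmx1. Qed.

Lemma word_mx_revK s : W (rev s) *m W s = 1%:M.
Proof.
elim: s => [|i s IH]; first by rewrite /= mulmx1.
by rewrite rev_cons /= mulmxA word_mx_rconsK.
Qed.

Lemma word_mx_Krev s : W s *m W (rev s) = 1%:M.
Proof. by rewrite -{1}(revK s) word_mx_revK. Qed.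

Lemma word_mx_unit s : W s \in unitmx.
Proof. by case: (mulmx1_unit (word_mx_Krev s)). Qed.

Lemma invmx_word_mx s : invmx (W s) = W (rev s).
Proof.
by rewrite -[invmx _]mulmx1 -(word_mx_Krev s) mulmxA mulVmx ?mul1mx ?word_mx_unit.
Qed.

Lemma invmx_sref i : invmx (sref A i) = sref A i.
Proof. by have := invmx_word_mx [:: i]; rewrite /= mulmx1. Qed.

Lemma inWJ_mul K (M N : 'M[rat]_n) : inWJ A K M -> inWJ A K N -> inWJ A K (M *m N).
Proof.
move=> [s [Ks ->]] [t [Kt ->]]; exists (s ++ t).
by rewrite all_cat Ks Kt word_mx_cat.
Qed.

Lemma inWJ_sref K i : i \in K -> inWJ A K (sref A i).
Proof. by move=> iK; exists [:: i]; rewrite /= iK mulmx1. Qed.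

Lemma inWJ_inv K (M : 'M[rat]_n) : inWJ A K M -> inWJ A K (invmx M).
Proof. by move=> [s [Ks ->]]; exists (rev s); rewrite invmx_word_mx all_rev. Qed.

Lemma inWJ_unit K (M : 'M[rat]_n) : inWJ A K M -> M \in unitmx.
Proof. by move=> [s [_ ->]]; apply: word_mx_unit. Qed.

Lemma inWJ_subset K I (M : 'M[rat]_n) : K \subset I -> inWJ A K M -> inWJ A I M.
Proof.
move=> sKI [s [Ks ->]]; exists s; split=> //.
by apply/allP => i /(allP Ks); apply: (subsetP sKI).
Qed.

Lemma invmx_mul K (M N : 'M[rat]_n) : inWJ A K M -> inWJ A K N ->
  invmx (M *m N) = invmx N *m invmx M.
Proof.
move=> [s [_ ->]] [t [_ ->]].
by rewrite -word_mx_cat !invmx_word_mx rev_cat word_mx_cat.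
Qed.


Lemma inW_inWJT (M : 'M[rat]_n) : inW A M <-> inWJ A [set: 'I_n] M.
Proof.
split=> [[s ->]|[s [_ ->]]]; last by exists s.
by exists s; split=> //; apply/allP => i; rewrite in_setT.
Qed.

Lemma inW_mul (M N : 'M[rat]_n) : inW A M -> inW A N -> inW A (M *m N).
Proof. by rewrite !inW_inWJT; apply: inWJ_mul. Qed.

(* Length in the parabolic subgroup W_K; a junk value outside W_K. *)
Definition is_plen K (M : 'M[rat]_n) (k : nat) : Prop :=
  (exists s, [/\ wordin K s, size s = k & W s = M]) /\
  (forall s, wordin K s -> W s = M -> (k <= size s)%N).

Definition plen K (M : 'M[rat]_n) : nat := epsilon (inhabits 0%N) (is_plen K M).

Lemma plenP K (M : 'M[rat]_n) : inWJ A K M -> is_plen K M (plen K M).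
Proof.
move=> [s0 [Ks0 ->]]; apply: epsilon_spec.
have [k [[s [Ks sz_s Ws]] k_min]] := classic_ex_minn
  (ex_intro (fun k => exists s, [/\ wordin K s, size s = k & W s = W s0]) _
     (ex_intro _ s0 (And3 Ks0 erefl erefl))).
exists k; split; first by exists s.
by move=> t Kt Wt; apply: k_min; exists t.
Qed.

Lemma is_plen_uniq K (M : 'M[rat]_n) k k' : is_plen K M k -> is_plen K M k' -> k = k'.
Proof.
move=> [[s [Ks <- Ws]] s_min] [[s' [Ks' <- Ws']] s'_min].
by apply/eqP; rewrite eqn_leq s_min // s'_min.
Qed.

Lemma plen_le_size K (M : 'M[rat]_n) s : wordin K s -> W s = M -> (plen K M <= size s)%N.
Proof.
move=> Ks Ws; have [_] := plenP (ex_intro _ s (conj Ks (esym Ws))).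
exact.
Qed.

Lemma reduced_word K (M : 'M[rat]_n) : inWJ A K M ->
  exists s, [/\ wordin K s, size s = plen K M & W s = M].
Proof. by case/plenP. Qed.

Lemma plen_eq0 K (M : 'M[rat]_n) : inWJ A K M -> plen K M = 0%N -> M = 1%:M.
Proof. by case/reduced_word => -[|i s] [_ /= <- <-]. Qed.

Lemma plen_mul_le K (M N : 'M[rat]_n) : inWJ A K M -> inWJ A K N ->
  (plen K (M *m N) <= plen K M + plen K N)%N.
Proof.
move=> /reduced_word [s [Ks <- <-]] /reduced_word [t [Kt <- <-]].
by rewrite -size_cat; apply: plen_le_size; rewrite ?all_cat ?Ks ?Kt // word_mx_cat.
Qed.

Lemma plen_inv_le K (M : 'M[rat]_n) : inWJ A K M -> (plen K (invmx M) <= plen K M)%N.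
Proof.
move=> /reduced_word [s [Ks <- <-]]; rewrite -size_rev.
by apply: plen_le_size; rewrite ?all_rev // invmx_word_mx.
Qed.

Lemma plen_inv K (M : 'M[rat]_n) : inWJ A K M -> plen K (invmx M) = plen K M.
Proof.
move=> KM; apply/eqP; rewrite eqn_leq plen_inv_le //=.
by have := plen_inv_le (inWJ_inv KM); rewrite invmxK.
Qed.

Lemma plen_subset K I (M : 'M[rat]_n) : K \subset I -> inWJ A K M ->
  (plen I M <= plen K M)%N.
Proof.
move=> sKI /reduced_word [s [Ks <- <-]]; apply: plen_le_size => //.
by apply/allP => i /(allP Ks); apply: (subsetP sKI).
Qed.

Lemma plen_sref K i : i \in K -> (plen K (sref A i) <= 1)%N.
Proof. by move=> iK; apply: (@plen_le_size K _ [:: i]); rewrite /= ?iK // mulmx1. Qed.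

Lemma plen_mulsl K (M : 'M[rat]_n) i : inWJ A K M -> i \in K ->
  (plen K (sref A i *m M) <= (plen K M).+1)%N.
Proof.
move=> KM iK; apply: leq_trans (plen_mul_le (inWJ_sref iK) KM) _.
by rewrite addnC -addn1 leq_add2l plen_sref.
Qed.

Lemma wlen_plenT (M : 'M[rat]_n) : inW A M -> wlen A M = plen [set: 'I_n] M.
Proof.
have is_lengthE k : is_length A M k <-> is_plen [set: 'I_n] M k.
  have allT s : wordin [set: 'I_n] s by apply/allP => i; rewrite in_setT.
  split=> [[[s [sz_s Ws]] s_min]|[[s [_ sz_s Ws]] s_min]].
    by split=> [|t _]; [exists s | apply: s_min].
  by split=> [|t]; [exists s | apply: s_min].
move=> /inW_inWJT /plenP TM.
have : is_length A M (wlen A M).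
  by apply: epsilon_spec; exists (plen [set: 'I_n] M); apply/is_lengthE.
by move/is_lengthE/is_plen_uniq; apply.
Qed.

Lemma inW_word_mx s : inW A (W s).
Proof. by exists s. Qed.

Lemma inW_sref i : inW A (sref A i).
Proof. by exists [:: i]; rewrite /= mulmx1. Qed.

Lemma inW_inv (M : 'M[rat]_n) : inW A M -> inW A (invmx M).
Proof. by rewrite !inW_inWJT; apply: inWJ_inv. Qed.

Lemma inW_unit (M : 'M[rat]_n) : inW A M -> M \in unitmx.
Proof. by rewrite inW_inWJT; apply: inWJ_unit. Qed.

Lemma wlen_mul_le (M N : 'M[rat]_n) : inW A M -> inW A N ->
  (wlen A (M *m N) <= wlen A M + wlen A N)%N.
Proof.
move=> WM WN; rewrite (wlen_plenT WM) (wlen_plenT WN) (wlen_plenT (inW_mul WM WN)).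
by apply: plen_mul_le; apply/inW_inWJT.
Qed.

Lemma wlen_word_mx s : (wlen A (W s) <= size s)%N.
Proof.
rewrite (wlen_plenT (inW_word_mx s)); apply: plen_le_size => //.
by apply/allP => i; rewrite in_setT.
Qed.

Lemma bruhat_le_wlen (M N : 'M[rat]_n) : bruhat_le A M N -> (wlen A M <= wlen A N)%N.
Proof. by elim=> // {}M {}N t _ le_MN _ /ltnW; apply: leq_trans. Qed.

(** * Rank two *)

Fixpoint altw (i j : 'I_n) (c : bool) (k : nat) : seq 'I_n :=
  if k is k'.+1 then rcons (altw i j (~~ c) k') (if c then i else j) else [::].

Lemma size_altw i j c k : size (altw i j c k) = k.
Proof. by elim: k c => [|k IH] c //=; rewrite size_rcons IH. Qed.

Lemma wordin_altw i j c k : wordin [set i; j] (altw i j c k).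
Proof.
elim: k c => [|k IH] c //=; rewrite all_rcons IH andbT.
by case: c; rewrite !inE eqxx ?orbT.
Qed.

Lemma altw_suffix i j c d m : exists t, altw i j c (d + m) = t ++ altw i j c m.
Proof.
elim: m c => [|m IH] c; first by exists (altw i j c d); rewrite addn0 cats0.
by have [t Et] := IH (~~ c); exists t; rewrite addnS /= Et rcons_cat.
Qed.

Lemma altw_of_wordin i j s : i != j -> wordin [set i; j] s ->
  exists c k, (k <= size s)%N /\ W s = W (altw i j c k).
Proof.
move=> ij; elim/last_ind: s => [|s l IH]; first by exists true, 0%N.
rewrite all_rcons => /andP [lij /IH [c [k [le_ks Ws]]]].
rewrite size_rcons word_mx_rcons Ws.
case: k le_ks Ws => [|k] le_ks Ws.
  exists (l == i), 1%N; split=> //=; rewrite !mul1mx mulmx1.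
  by move: lij; rewrite !inE; case: eqP => [->|_] //= /eqP ->.
have [l_last|l_new] := eqVneq l (if c then i else j).
  exists (~~ c), k; split; first by lia.
  by rewrite /= l_last word_mx_rconsK.
exists (~~ c), k.+2; split=> //.
have -> : altw i j (~~ c) k.+2 = rcons (altw i j c k.+1) (if ~~ c then i else j).
  by clear Ws l_new; case: c.
rewrite word_mx_rcons; congr (_ *m sref A _).
by clear Ws; move: lij l_new; rewrite !inE; case: c => /orP [] /eqP -> /=; rewrite ?eqxx.
Qed.

(* Coordinates (p, q) of x0 + p alpha_i + q alpha_j after applying s_i (c true)
   or s_j (c false), where a = A i j, b = A j i and ci, cj are the coroots of x0
   at i and j. *)
Definition plane_sref (a b ci cj : rat) (c : bool) (pq : rat * rat) : rat * rat :=
  if c then (- pq.1 - ci - a * pq.2, pq.2) else (pq.1, - pq.2 - cj - b * pq.1).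

Fixpoint plane_altw (a b ci cj : rat) (c : bool) (k : nat) (pq : rat * rat) :=
  if k is k'.+1 then plane_altw a b ci cj (~~ c) k' (plane_sref a b ci cj c pq)
  else pq.

Definition in_plane (i j : 'I_n) (pq : rat * rat) : 'cV[rat]_n :=
  pq.1 *: alpha i + pq.2 *: alpha j.

Lemma altw_in_plane i j (x0 : 'cV[rat]_n) c k pq :
  W (altw i j c k) *m (x0 + in_plane i j pq) =
  x0 + in_plane i j
         (plane_altw (A i j)%:~R (A j i)%:~R (coroot i x0) (coroot j x0) c k pq).
Proof.
elim: k c pq => [|k IH] c pq /=; first by rewrite mul1mx.
rewrite word_mx_rcons -mulmxA -IH; congr (_ *m _).
case: c; rewrite sref_mul /in_plane !corootD !corootZ !coroot_alpha !A_diag /=;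
  apply/matrixP => k1 l; rewrite !mxE; ring.
Qed.

Lemma braid_altw i j m :
  (forall ci cj, plane_altw (A i j)%:~R (A j i)%:~R ci cj true m (0, 0) =
                 plane_altw (A i j)%:~R (A j i)%:~R ci cj false m (0, 0)) ->
  W (altw i j true m) = W (altw i j false m).
Proof.
move=> braid; apply: eq_mx_alpha => k.
have := altw_in_plane i j (alpha k) true m (0, 0).
have := altw_in_plane i j (alpha k) false m (0, 0).
by rewrite /in_plane /= !scale0r !addr0 => -> ->; rewrite braid.
Qed.

(* m is the order of s_i s_j: the braid relation of length m holds, and the
   alternating words of length < m ending with s_j map alpha_i to nonnegative
   combinations of alpha_i and alpha_j. *)
Definition rank2_data (a b : int) (m : nat) : Prop :=
  [/\ (0 < m)%N,
      forall ci cj, plane_altw a%:~R b%:~R ci cj true m (0, 0) =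
                    plane_altw a%:~R b%:~R ci cj false m (0, 0)
    & forall k, (k < m)%N ->
        0 <= (plane_altw a%:~R b%:~R 0 0 false k (1, 0)).1 /\
        0 <= (plane_altw a%:~R b%:~R 0 0 false k (1, 0)).2].

Lemma rank2_data_finite (a b : int) : a <= 0 -> b <= 0 -> (a == 0) = (b == 0) ->
  a * b < 4 -> exists m, rank2_data a b m.
Proof.
move=> a_le0 b_le0 ab0 ab_lt4.
have : (a = 0 /\ b = 0) \/ (a = -1 /\ b = -1) \/ (a = -1 /\ b = -2) \/
       (a = -2 /\ b = -1) \/ (a = -1 /\ b = -3) \/ (a = -3 /\ b = -1) by nia.
case=> [[-> ->]|[[-> ->]|[[-> ->]|[[-> ->]|[[-> ->]|[-> ->]]]]]];
  [exists 2%N | exists 3%N | exists 4%N | exists 4%N | exists 6%N | exists 6%N];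
  split=> //.
all: try by move=> ci cj /=; congr pair; ring.
all: move=> k; do 7?[case: k => [_|k]; first by split=> /=; lra]; by [].
Qed.

Lemma rank2_nonneg_of_data i j m (v : 'M[rat]_n) : i != j ->
  rank2_data (A i j) (A j i) m -> inWJ A [set i; j] v ->
  (plen [set i; j] v <= plen [set i; j] (v *m sref A i))%N ->
  exists p q, [/\ 0 <= p, 0 <= q & v *m alpha i = p *: alpha i + q *: alpha j].
Proof.
move=> ij [m_gt0 /braid_altw braid nonneg_altw] Iv le_v_vi.
have [s [Is sz_s Ws]] := reduced_word Iv.
have [c [k [le_ks Wk]]] := altw_of_wordin ij Is.
have {Ws Wk} Wv : W (altw i j c k) = v by rewrite -Wk.
have Ek : k = plen [set i; j] v.
  by have := plen_le_size (wordin_altw i j c k) Wv; rewrite size_altw; lia.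
have no_shorter t : wordin [set i; j] t -> W t = v *m sref A i -> (size t < k)%N -> False.
  by move=> It /(plen_le_size It); lia.
(* A reduced alternating word for v can neither end with s_i nor, by the braid
   relation, have length at least m. *)
case: k Ek Wv no_shorter {le_ks} => [|k] Ek Wv no_shorter.
  by exists 1, 0; rewrite -Wv /= mul1mx scale1r scale0r addr0.
case: c Wv => Wv.
  case: (no_shorter (altw i j false k)); first exact: wordin_altw.
    by rewrite -Wv word_mx_rconsK.
  by rewrite size_altw.
have [le_mk|lt_km] := leqP m k.+1.
  have [t Et] := altw_suffix i j false (k.+1 - m) m; rewrite subnK // in Et.
  have It : wordin [set i; j] t.
    by have := wordin_altw i j false k.+1; rewrite Et all_cat => /andP [].
  case: m m_gt0 braid {nonneg_altw} le_mk Et => [|m] // _ braid le_mk Et.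
  case: (no_shorter (t ++ altw i j false m)).
  - by rewrite all_cat It wordin_altw.
  - by rewrite -Wv Et !word_mx_cat -braid /= -mulmxA word_mx_rconsK.
  - by have := congr1 size Et; rewrite !size_cat !size_altw; lia.
have [p_ge0 q_ge0] := nonneg_altw _ lt_km.
have := altw_in_plane i j 0 false k.+1 (1, 0).
rewrite !coroot0 !add0r Wv /in_plane scale1r scale0r addr0 => ->.
by do 2!eexists; split; [exact: p_ge0 | exact: q_ge0 |].
Qed.

(** * Positivity and integrality of roots *)

Definition nonneg (x : 'cV[rat]_n) : Prop := forall k, 0 <= x k 0.
Definition nonpos (x : 'cV[rat]_n) : Prop := forall k, x k 0 <= 0.

Lemma nonneg_alpha i : nonneg (alpha i).
Proof. by move=> k; rewrite mxE ler0n. Qed.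

Lemma nonneg_comb (x y : 'cV[rat]_n) p q : nonneg x -> nonneg y -> 0 <= p -> 0 <= q ->
  nonneg (p *: x + q *: y).
Proof. by move=> x_ge0 y_ge0 p_ge0 q_ge0 k; rewrite !mxE addr_ge0 // mulr_ge0. Qed.

Lemma nonpos_of_nonnegN (x : 'cV[rat]_n) : nonneg (- x) -> nonpos x.
Proof. by move=> Nx_ge0 k; have := Nx_ge0 k; rewrite mxE oppr_ge0. Qed.

Lemma nonneg_nonpos_eq0 (x : 'cV[rat]_n) : nonneg x -> nonpos x -> x = 0.
Proof.
move=> x_ge0 x_le0; apply/matrixP => k l; rewrite ord1 mxE.
by apply/eqP; rewrite eq_le x_ge0 x_le0.
Qed.

Lemma mulmx_alpha_neq0 (M : 'M[rat]_n) i : M \in unitmx -> M *m alpha i != 0.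
Proof.
move=> Mu; apply: contra_neq (oner_neq0 rat) => Mai0.
have := congr1 (fun x => (invmx M *m x) i 0) Mai0.
by rewrite mulmxA mulVmx // mul1mx mulmx0 !mxE eqxx.
Qed.

Lemma parabolic_descent_factor K I (v0 vI0 : 'M[rat]_n) : I \subset K ->
  inWJ A K v0 -> inWJ A I vI0 ->
  (plen K v0 + plen I vI0 <= plen K (v0 *m vI0))%N ->
  exists v vI, [/\ inWJ A K v, inWJ A I vI, v0 *m vI0 = v *m vI,
    (plen K v + plen I vI <= plen K (v0 *m vI0))%N &
    (plen K v <= plen K v0)%N /\
    forall l, l \in I -> (plen K v <= plen K (v *m sref A l))%N].
Proof.
move=> sIK Kv0 IvI0 len0; set x := v0 *m vI0.
pose factor k := exists v vI, [/\ inWJ A K v, inWJ A I vI, x = v *m vI,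
  (plen K v + plen I vI <= plen K x)%N & plen K v = k].
have [k [[v [vI [Kv IvI Ex len_v Ek]]] k_min]] :=
  classic_ex_minn (ex_intro factor _ (ex_intro _ v0 (ex_intro _ vI0 (And5 Kv0 IvI0 erefl len0 erefl)))).
exists v, vI; split=> //; split=> [|l lI]; first by rewrite Ek; apply: k_min; exists v0, vI0.
have lK : l \in K := subsetP sIK l lI.
rewrite leqNgt; apply/negP => lt_vl_v.
have : factor (plen K (v *m sref A l)).
  exists (v *m sref A l), (sref A l *m vI); split=> //.
  - by apply: inWJ_mul => //; apply: inWJ_sref.
  - by apply: inWJ_mul => //; apply: inWJ_sref.
  - by rewrite mulmxA -(mulmxA v) sref_sqr mulmx1.
  - by have := plen_mulsl IvI lI; lia.
by move/k_min; rewrite -Ek leqNgt lt_vl_v.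
Qed.

Definition intmx (M : 'M[rat]_n) : Prop := exists B : 'M[int]_n, M = map_mx intr B.

Lemma intmx_word_mx s : intmx (W s).
Proof.
elim: s => [|i s [B EB]] /=; first by exists 1%:M; rewrite map_mx1.
rewrite EB; exists ((\matrix_(k, l) ((k == l)%:Z - (k == i)%:Z * A i l)) *m B).
rewrite map_mxM; congr (_ *m _); apply/matrixP => k l; rewrite !mxE.
by rewrite rmorphB rmorphM /= !pmulrn.
Qed.

(* x alpha_j = c alpha_i where c is an entry of x, while alpha_j = c x^-1 alpha_i
   with x^-1 integral as well: the nonnegative integer c is a unit. *)
Lemma eq_alpha_of_sref_nonpos (x : 'M[rat]_n) i j : inW A x ->
  nonneg (x *m alpha j) -> nonpos (sref A i *m (x *m alpha j)) -> x *m alpha j = alpha i.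
Proof.
move=> [s ->]; set beta := W s *m alpha j => beta_ge0 ibeta_le0.
have beta_i : beta = W s i j *: alpha i.
  apply/matrixP => k l; rewrite ord1 [RHS]mxE [alpha i k 0]mxE.
  have [->|ki] := eqVneq k i; first by rewrite /beta /alpha -colE !mxE mulr1.
  rewrite mulr0; apply/eqP; rewrite eq_le beta_ge0 andbT.
  by have := ibeta_le0 k; rewrite sref_mul !mxE (negbTE ki) /= mulr0 subr0.
have [B EB] := intmx_word_mx s; have [C EC] := intmx_word_mx (rev s).
have : alpha j = W s i j *: (W (rev s) *m alpha i).
  by rewrite scalemxAr -beta_i /beta mulmxA word_mx_revK mul1mx.
move/(congr1 (fun y : 'cV[rat]_n => y j 0)).
rewrite [LHS]mxE !eqxx /= [RHS]mxE /alpha -colE [col _ _ _ _]mxE EB EC !mxE -rmorphM /=.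
move=> /esym /eqP; rewrite -[1 : rat]/((1 : int)%:~R) eqr_int mulrC.
have Bij_ge0 : 0 <= B i j.
  by have := beta_ge0 i; rewrite beta_i EB !mxE eqxx mulr1 ler0z.
rewrite -(gez0_abs Bij_ge0) intUnitRing.mulzn_eq1 => /andP [_ /eqP Bij1].
by rewrite beta_i EB mxE -(gez0_abs Bij_ge0) Bij1 scale1r.
Qed.

Section InvariantForm.
Variable d : 'I_n -> rat.
Hypothesis d_sym : forall i j, d i * (A i j)%:~R = d j * (A j i)%:~R.

Definition wform (x y : 'cV[rat]_n) : rat := \sum_k x k 0 * (d k * coroot k y).

Lemma wformBl (x x' y : 'cV[rat]_n) : wform (x - x') y = wform x y - wform x' y.
Proof. by rewrite /wform -sumrB; apply: eq_bigr => k _; rewrite !mxE mulrBl. Qed.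

Lemma wformZl c (x y : 'cV[rat]_n) : wform (c *: x) y = c * wform x y.
Proof. by rewrite /wform mulr_sumr; apply: eq_bigr => k _; rewrite mxE -mulrA. Qed.

Lemma wformC (x y : 'cV[rat]_n) : wform x y = wform y x.
Proof.
rewrite /wform /coroot.
under eq_bigr => k _ do rewrite mxE mulr_sumr mulr_sumr.
under [RHS]eq_bigr => k _ do rewrite mxE mulr_sumr mulr_sumr.
rewrite exchange_big /=; apply: eq_bigr => l _; apply: eq_bigr => k _.
rewrite !mxE; have := d_sym k l.
move: (d k) (d l) (A k l)%:~R (A l k)%:~R => dk dl akl alk dkl.
by transitivity ((dk * akl) * (x k 0 * y l 0)); [ring | rewrite dkl; ring].
Qed.

Lemma wformBr (x y y' : 'cV[rat]_n) : wform x (y - y') = wform x y - wform x y'.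
Proof. by rewrite wformC wformBl -!(wformC x). Qed.

Lemma wformZr c (x y : 'cV[rat]_n) : wform x (c *: y) = c * wform x y.
Proof. by rewrite wformC wformZl wformC. Qed.

Lemma wform_alphal k (y : 'cV[rat]_n) : wform (alpha k) y = d k * coroot k y.
Proof.
rewrite /wform (bigD1 k) //= big1 ?addr0; first by rewrite mxE !eqxx mul1r.
by move=> l /negbTE lk; rewrite mxE lk mul0r.
Qed.

Lemma wform_word_mx s (x y : 'cV[rat]_n) : wform (W s *m x) (W s *m y) = wform x y.
Proof.
elim: s x y => [|i s IH] x y /=; rewrite ?mul1mx // -!mulmxA !sref_mul.
rewrite wformBl !wformBr !wformZl !wformZr ![wform _ (alpha i)]wformC !wform_alphal.
by rewrite coroot_alpha A_diag IH; ring.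
Qed.

End InvariantForm.

Lemma sum_supp2 i j (F : 'I_n -> rat) : i != j ->
  (forall k, k != i -> k != j -> F k = 0) -> \sum_k F k = F i + F j.
Proof.
move=> ij F0; rewrite (bigD1 i) //= (bigD1 j) /=; last by rewrite eq_sym.
by rewrite big1 ?addr0 // => k /andP [kj ki]; apply: F0.
Qed.


Section FiniteType.
Hypothesis hA : finite_type A.

Lemma cartan_prod_lt4 i j : i != j -> A i j * A j i < 4.
Proof.
move=> ij; have [_ [d [d_gt0 _ pos_def]]] := hA.
pose x : 'cV[rat]_n := (- (A i j)%:~R) *: alpha i + 2%:R *: alpha j.
have xi : x i 0 = - (A i j)%:~R by rewrite !mxE !eqxx (negbTE ij) /= mulr1 mulr0 addr0.
have xj : x j 0 = 2.
  by rewrite !mxE !eqxx eq_sym (negbTE ij) /= mulr0 add0r mulr1.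
have x0 k : k != i -> k != j -> x k 0 = 0.
  by move=> ki kj; rewrite !mxE (negbTE ki) (negbTE kj) /=; ring.
have x_neq0 : x != 0.
  by apply/eqP => /(congr1 (fun y : 'cV[rat]_n => y j 0)); rewrite xj mxE.
have := pos_def x x_neq0; rewrite (sum_supp2 ij); last first.
  by move=> k ki kj; rewrite (x0 k) // !mul0r big1 // => l _; rewrite !mul0r.
rewrite (sum_supp2 (F := fun l => x i 0 * d i * (A i l)%:~R * x l 0) ij); last first.
  by move=> l li lj; rewrite (x0 l) // mulr0.
rewrite (sum_supp2 (F := fun l => x j 0 * d j * (A j l)%:~R * x l 0) ij); last first.
  by move=> l li lj; rewrite (x0 l) // mulr0.
rewrite xi xj !A_diag => Q_gt0.
have : 0 < d j * (4 - (A i j)%:~R * (A j i)%:~R) by rewrite mulrBr; nra.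
by rewrite pmulr_rgt0 // subr_gt0 -rmorphM /= -[4 : rat]/((4 : int)%:~R) ltr_int.
Qed.

Lemma rank2_nonneg i j (v : 'M[rat]_n) : i != j -> inWJ A [set i; j] v ->
  (plen [set i; j] v <= plen [set i; j] (v *m sref A i))%N ->
  exists p q, [/\ 0 <= p, 0 <= q & v *m alpha i = p *: alpha i + q *: alpha j].
Proof.
move=> ij; have [[_ A_le0 A0_sym] _] := hA.
have ji : j != i by rewrite eq_sym.
have [m data] := rank2_data_finite (A_le0 i j ij) (A_le0 j i ji) (A0_sym i j)
  (cartan_prod_lt4 ij).
exact: rank2_nonneg_of_data data.
Qed.

Theorem nonneg_of_plen_le K (x : 'M[rat]_n) i : inWJ A K x -> i \in K ->
  (plen K x <= plen K (x *m sref A i))%N -> nonneg (x *m alpha i).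
Proof.
move Nx: (plen K x) => N; elim/ltn_ind: N x i Nx => N IH x i Nx Kx iK le_x_xi.
case: N IH Nx le_x_xi => [|N] IH Nx le_x_xi.
  by rewrite (plen_eq0 Kx Nx) mul1mx; apply: nonneg_alpha.
have [s [Ks sz_s Ws]] := reduced_word Kx.
case/lastP: s Ks sz_s Ws => [|s j]; first by rewrite Nx.
rewrite all_rcons size_rcons Nx => /andP [jK Ks] [sz_s] Ws.
have len_xj : (plen K (x *m sref A j) <= N)%N.
  by rewrite -Ws word_mx_rconsK -sz_s; apply: plen_le_size.
have ij : i != j by apply: contraTneq le_x_xi => ->; rewrite -ltnNge ltnS.
set I := [set i; j].
have iI : i \in I by rewrite !inE eqxx.
have jI : j \in I by rewrite !inE eqxx orbT.
have sIK : I \subset K by apply/subsetP => l; rewrite !inE => /orP [] /eqP ->.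
have Kxj : inWJ A K (x *m sref A j) by apply: inWJ_mul => //; apply: inWJ_sref.
have [|v [vI [Kv IvI Ex len_v [le_v v_min]]]] :=
  parabolic_descent_factor sIK Kxj (inWJ_sref jI).
  by rewrite -mulmxA sref_sqr mulmx1 Nx -addn1 leq_add // plen_sref.
rewrite -mulmxA sref_sqr mulmx1 in Ex len_v.
have lt_v_N : (plen K v < N.+1)%N by rewrite ltnS (leq_trans le_v).
have vi := IH _ lt_v_N v i erefl Kv iK (v_min i iI).
have vj := IH _ lt_v_N v j erefl Kv jK (v_min j jI).
have IvIi : inWJ A I (vI *m sref A i) by apply: inWJ_mul => //; apply: inWJ_sref.
have le_vI_vIi : (plen I vI <= plen I (vI *m sref A i))%N.
  rewrite leqNgt; apply/negP => lt_vIi_vI.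
  have Exi : x *m sref A i = v *m (vI *m sref A i) by rewrite Ex mulmxA.
  have := plen_mul_le Kv (inWJ_subset sIK IvIi); have := plen_subset sIK IvIi.
  by rewrite -Exi; lia.
have [p [q [p_ge0 q_ge0 vIi]]] := rank2_nonneg ij IvI le_vI_vIi.
by rewrite Ex -mulmxA vIi mulmxDr -!scalemxAr; apply: nonneg_comb.
Qed.

Lemma nonpos_of_plen_ge K (x : 'M[rat]_n) i : inWJ A K x -> i \in K ->
  (plen K (x *m sref A i) <= plen K x)%N -> nonpos (x *m alpha i).
Proof.
move=> Kx iK le_xi_x; apply: nonpos_of_nonnegN.
have Kxi : inWJ A K (x *m sref A i) by apply: inWJ_mul => //; apply: inWJ_sref.
have := nonneg_of_plen_le Kxi iK; rewrite -mulmxA sref_sqr mulmx1 => /(_ le_xi_x).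
by rewrite -mulmxA sref_alpha_self mulmxN.
Qed.

Lemma plen_lt_of_nonneg K (x : 'M[rat]_n) i : inWJ A K x -> i \in K ->
  nonneg (x *m alpha i) -> (plen K x < plen K (x *m sref A i))%N.
Proof.
move=> Kx iK xi_ge0; rewrite ltnNge; apply/negP => le_xi_x.
have := mulmx_alpha_neq0 i (inWJ_unit Kx).
by rewrite (nonneg_nonpos_eq0 xi_ge0 (nonpos_of_plen_ge Kx iK le_xi_x)) eqxx.
Qed.

Lemma nonneg_or_nonpos K (x : 'M[rat]_n) i : inWJ A K x -> i \in K ->
  nonneg (x *m alpha i) \/ nonpos (x *m alpha i).
Proof.
move=> Kx iK; have [le_x_xi|lt_xi_x] := leqP (plen K x) (plen K (x *m sref A i)).
  by left; apply: nonneg_of_plen_le Kx iK le_x_xi.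
by right; apply: nonpos_of_plen_ge Kx iK (ltnW lt_xi_x).
Qed.

Lemma plen_lt_mulsl_of_nonneg K (x : 'M[rat]_n) i : inWJ A K x -> i \in K ->
  nonneg (invmx x *m alpha i) -> (plen K x < plen K (sref A i *m x))%N.
Proof.
move=> Kx iK xi_ge0; have Ki := inWJ_sref iK.
rewrite -(plen_inv Kx) -(plen_inv (inWJ_mul Ki Kx)) (invmx_mul Ki Kx) invmx_sref.
exact: plen_lt_of_nonneg (inWJ_inv Kx) iK xi_ge0.
Qed.

Lemma nonneg_of_plen_lt_mulsl K (x : 'M[rat]_n) i : inWJ A K x -> i \in K ->
  (plen K x < plen K (sref A i *m x))%N -> nonneg (invmx x *m alpha i).
Proof.
move=> Kx iK lt_x_ix; have Ki := inWJ_sref iK.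
apply: nonneg_of_plen_le (inWJ_inv Kx) iK _.
rewrite -[X in _ *m X]invmx_sref -(invmx_mul Ki Kx) (plen_inv Kx) (plen_inv (inWJ_mul Ki Kx)).
exact: ltnW.
Qed.

Lemma sref_conj_of_alpha (x : 'M[rat]_n) i j : inW A x -> x *m alpha j = alpha i ->
  sref A i *m x = x *m sref A j.
Proof.
move=> [s ->] xj; have [_ [d [d_gt0 d_sym _]]] := hA.
have dij : d i = d j.
  have := wform_word_mx d_sym s (alpha j) (alpha j).
  by rewrite xj !wform_alphal !coroot_alpha !A_diag; lra.
apply: eq_mx_alpha => k; rewrite -!mulmxA sref_mul sref_alpha mulmxBr -scalemxAr xj.
congr (_ - _ *: _); apply: (mulfI (lt0r_neq0 (d_gt0 i))).
by have := wform_word_mx d_sym s (alpha j) (alpha k); rewrite xj !wform_alphal coroot_alpha dij.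
Qed.

(** * Minimal coset representatives *)

Section Parabolic.
Variable J : {set 'I_n}.

Definition Jpositive (a : 'M[rat]_n) : Prop :=
  inW A a /\ forall j, j \in J -> nonneg (a *m alpha j).

Lemma minrep_Jpositive (w : 'M[rat]_n) : minrep A J w -> Jpositive w.
Proof.
move=> [Ww w_min]; split=> // j jJ.
have := w_min _ (inWJ_sref jJ).
rewrite (wlen_plenT Ww) (wlen_plenT (inW_mul Ww (inW_sref j))).
exact: nonneg_of_plen_le (proj1 (inW_inWJT w) Ww) (in_setT j).
Qed.

Lemma inWJ_coord_out (b : 'M[rat]_n) (y : 'cV[rat]_n) k : inWJ A J b -> k \notin J ->
  (b *m y) k 0 = y k 0.
Proof.
move=> [s [Js ->]] kJ; elim: s Js y => [|l s IH] /=; first by move=> _ y; rewrite mul1mx.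
move=> /andP [lJ Js] y; rewrite -mulmxA sref_mul -(IH Js y).
set z := W s *m y; rewrite !mxE.
have -> : (k == l) = false by apply: contraNF kJ => /eqP ->.
by rewrite mulr0 subr0.
Qed.

Lemma nonpos_mul_Jsupp (a : 'M[rat]_n) (y : 'cV[rat]_n) :
  (forall j, j \in J -> nonneg (a *m alpha j)) -> nonpos y ->
  (forall k, k \notin J -> y k 0 = 0) -> nonpos (a *m y).
Proof.
move=> a_pos y_le0 y_supp m; rewrite mxE; apply: sumr_le0 => k _.
have [kJ|kJ] := boolP (k \in J); last by rewrite y_supp // mulr0.
have := a_pos k kJ m; rewrite /alpha -colE mxE => amk_ge0.
exact: mulr_ge0_le0.
Qed.

Lemma Jpositive_factor_uniq (a a' b b' : 'M[rat]_n) : Jpositive a -> Jpositive a' ->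
  inWJ A J b -> inWJ A J b' -> a *m b = a' *m b' -> a = a'.
Proof.
move=> [Wa a_pos] [_ a'_pos] Jb Jb' Eab.
set c := b' *m invmx b.
have Jc : inWJ A J c by apply: inWJ_mul => //; apply: inWJ_inv.
have Ea : a = a' *m c by rewrite /c mulmxA -Eab mulmxK // (inWJ_unit Jb).
have [c0|c_neq0] := eqVneq (plen J c) 0%N; first by rewrite Ea (plen_eq0 Jc c0) mulmx1.
have [s [Js sz_s Ws]] := reduced_word Jc.
case/lastP: s Js sz_s Ws => [|s j]; first by move=> _ /esym/eqP; rewrite (negbTE c_neq0).
rewrite all_rcons size_rcons => /andP [jJ Js] sz_s Ws.
have c_desc : (plen J (c *m sref A j) <= plen J c)%N.
  by rewrite -sz_s -Ws word_mx_rconsK leqW // plen_le_size.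
have cj_supp k : k \notin J -> (c *m alpha j) k 0 = 0.
  move=> kJ; rewrite inWJ_coord_out // mxE.
  by case: eqP => // Ekj; rewrite Ekj jJ in kJ.
have aj_le0 := nonpos_mul_Jsupp a'_pos (nonpos_of_plen_ge Jc jJ c_desc) cj_supp.
rewrite mulmxA -Ea in aj_le0.
have := mulmx_alpha_neq0 j (inW_unit Wa).
by rewrite (nonneg_nonpos_eq0 (a_pos j jJ) aj_le0) eqxx.
Qed.

Lemma Jpositive_step (a b : 'M[rat]_n) i : Jpositive a -> inWJ A J b ->
  (wlen A (a *m b) < wlen A (sref A i *m (a *m b)))%N ->
  (Jpositive (sref A i *m a) /\ (wlen A a < wlen A (sref A i *m a))%N) \/
  exists2 j, j \in J & a *m alpha j = alpha i.
Proof.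
move=> [Wa a_pos] Jb lt_ab.
have Wb : inW A b by apply/inW_inWJT; apply: inWJ_subset (subsetT J) Jb.
have Wia := inW_mul (inW_sref i) Wa.
have [ia_pos|] := classic (forall j, j \in J -> nonneg (sref A i *m a *m alpha j)).
  have Ta := proj1 (inW_inWJT a) Wa; have Tb := proj1 (inW_inWJT b) Wb.
  have ai_ge0 : nonneg (invmx a *m alpha i).
    have [//|ai_le0] := nonneg_or_nonpos (inWJ_inv Ta) (in_setT i).
    have := nonneg_of_plen_lt_mulsl (inWJ_mul Ta Tb) (in_setT i).
    have Wiab := inW_mul (inW_sref i) (inW_mul Wa Wb).
    rewrite -(wlen_plenT (inW_mul Wa Wb)) -(wlen_plenT Wiab) => /(_ lt_ab).
    rewrite (invmx_mul Ta Tb) -mulmxA => bai_ge0.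
    have ai_supp k : k \notin J -> (invmx a *m alpha i) k 0 = 0.
      move=> kJ; apply/eqP; rewrite eq_le ai_le0 /=.
      by have := bai_ge0 k; rewrite (inWJ_coord_out _ (inWJ_inv Jb)).
    have := nonpos_mul_Jsupp a_pos ai_le0 ai_supp i.
    by rewrite mulmxA mulmxV ?inW_unit // mul1mx mxE !eqxx ler10.
  left; split=> //; rewrite !wlen_plenT //.
  exact: plen_lt_mulsl_of_nonneg Ta (in_setT i) ai_ge0.
move=> /not_all_ex_not [j /(imply_to_and (j \in J)) [jJ iaj_not_ge0]].
right; exists j => //.
have Tia := proj1 (inW_inWJT _) Wia.
have [//|iaj_le0] := nonneg_or_nonpos Tia (in_setT j).
by apply: eq_alpha_of_sref_nonpos => //; [apply: a_pos | rewrite mulmxA].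
Qed.

Lemma Jpositive_chain t (a b : 'M[rat]_n) : Jpositive a -> inWJ A J b ->
  wlen A (W t *m (a *m b)) = (wlen A (a *m b) + size t)%N ->
  exists a' b', [/\ Jpositive a', inWJ A J b', W t *m (a *m b) = a' *m b',
    bruhat_le A a a' &
    a' = a -> forall i, i \in t -> exists2 j, j \in J & a *m alpha j = alpha i].
Proof.
elim: t a b => [|i t IH] a b a_pos Jb len_t.
  by exists a, b; split=> //; [rewrite mul1mx | exact: bruhat_refl].
have Wab : inW A (a *m b).
  by apply: inW_mul (proj1 a_pos) _; apply/inW_inWJT; apply: inWJ_subset (subsetT J) Jb.
have Wtab := inW_mul (inW_word_mx t) Wab.
have le_i := wlen_mul_le (inW_sref i) Wtab.
have le_t := wlen_mul_le (inW_word_mx t) Wab.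
have := wlen_word_mx [:: i]; have := wlen_word_mx t.
rewrite /= mulmx1 -mulmxA in len_t * => le_Wt le_si.
have len_t' : wlen A (W t *m (a *m b)) = (wlen A (a *m b) + size t)%N by lia.
have lt_i : (wlen A (W t *m (a *m b)) < wlen A (sref A i *m (W t *m (a *m b))))%N.
  by lia.
have [a1 [b1 [a1_pos Jb1 E1 le_a_a1 a1_eq]]] := IH a b a_pos Jb len_t'.
rewrite E1 in lt_i.
have [[ia1_pos lt_a1]|[j jJ a1j]] := Jpositive_step a1_pos Jb1 lt_i.
  have Wa1 := proj1 a1_pos.
  exists (sref A i *m a1), b1; split=> //; first by rewrite E1 mulmxA.
    have -> : sref A i *m a1 = a1 *m (invmx a1 *m sref A i *m a1).
      by rewrite !mulmxA mulmxV ?inW_unit // mul1mx.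
    apply: bruhat_step le_a_a1 _ _.
      by exists (invmx a1), i; rewrite invmxK; split=> //; apply: inW_inv.
    by rewrite !mulmxA mulmxV ?inW_unit // mul1mx.
  by move=> Eia1; have := bruhat_le_wlen le_a_a1; rewrite -Eia1 leqNgt lt_a1.
exists a1, (sref A j *m b1); split=> //.
- by apply: inWJ_mul => //; apply: inWJ_sref.
- by rewrite E1 mulmxA (sref_conj_of_alpha (proj1 a1_pos) a1j) -mulmxA.
- move=> Ea1 l; rewrite inE => /orP [/eqP ->|lt]; last exact: a1_eq.
  by exists j; rewrite // -Ea1.
Qed.

End Parabolic.

End FiniteType.

End WeylGroup.

Unset Implicit Arguments.

Theorem lemma5p8 (n : nat) (A : 'M[int]_n) (hA : finite_type A)
  (J : {set 'I_n}) (u w v w' v' : 'M[rat]_n) :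
  inW A u -> minrep A J w -> inWJ A J v ->
  minrep A J w' -> inWJ A J v' ->
  u *m w *m v = w' *m v' ->
  (wlen A (u *m w *m v) + wlen A u = wlen A (w *m v))%N ->
  bruhat_le A w' w /\
  (w' = w -> forall i, supp A u i -> exists2 j, j \in J & invmx w *m alpha i = alpha j).
Proof.
move=> Wu w_min Jv w'_min Jv' Euwv len_uwv.
have A_diag : forall i, A i i = 2 by case: hA => -[].
have w_pos := minrep_Jpositive A_diag hA w_min.
have w'_pos := minrep_Jpositive A_diag hA w'_min.
have peel s : word_mx A s = u -> size s = wlen A u ->
    bruhat_le A w' w /\
    (w' = w -> forall i, i \in s -> exists2 j, j \in J & w' *m alpha j = alpha i).
  move=> Ws sz_s.
  have Ewv : word_mx A (rev s) *m (w' *m v') = w *m v.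
    by rewrite -Euwv -Ws -!mulmxA mulmxA (word_mx_revK A_diag) mul1mx.
  have len_s : wlen A (word_mx A (rev s) *m (w' *m v')) = (wlen A (w' *m v') + size (rev s))%N.
    by rewrite Ewv size_rev sz_s -Euwv len_uwv.
  have [a [b [a_pos Jb Eab le_w'_a a_eq]]] := Jpositive_chain A_diag hA w'_pos Jv' len_s.
  have Ea : w = a.
    by apply: (Jpositive_factor_uniq A_diag hA w_pos a_pos Jv Jb); rewrite -Eab.
  split; first by rewrite Ea.
  by move=> Ew' i si; apply: a_eq; rewrite ?mem_rev // -Ea Ew'.
have [s [_ sz_s Ws]] := reduced_word (proj1 (inW_inWJT A u) Wu).
rewrite -(wlen_plenT Wu) in sz_s.
split; first by have [] := peel s Ws sz_s.
move=> Ew' i [s0 [Ws0 [sz_s0 i_s0]]].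
have [_ /(_ Ew' i i_s0) [j jJ w'j]] := peel s0 Ws0 sz_s0.
exists j => //; rewrite -w'j Ew' mulmxA mulVmx ?mul1mx //.
exact: inW_unit (proj1 w_min).
Qed.
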